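(* Let $n\ge 1$ and let $D_0,D_1,\dots,D_{2n}$ be positive integers. For $i=1,\dots,n$ let $A_i=\{A_i^{s}\}_{s=1}^{d_i}\subset M_{D_{2i-2}\times D_{2i-1}}(\mathbb{C})$ be injective MPS tensors, and let $B_i=\{B_i^{t}\}_{t=1}^{e_i}$ and $B_i'=\{B_i'^{t}\}_{t=1}^{e_i}$ be families in $M_{D_{2i-1}\times D_{2i}}(\mathbb{C})$, with $B_i$ not identically zero for every $i$. Suppose that for all indices $s_1,t_1,\dots,s_n,t_n$, $$A_1^{s_1}B_1^{t_1}A_2^{s_2}B_2^{t_2}\cdots A_n^{s_n}B_n^{t_n}=A_1^{s_1}B_1'^{t_1}A_2^{s_2}B_2'^{t_2}\cdots A_n^{s_n}B_n'^{t_n}$$ (equality of $D_0\times D_{2n}$ matrices). Then there exist nonzero scalars $\beta_1,\dots,\beta_n\in\mathbb{C}$ with $\prod_{i=1}^n\beta_i=1$ such that $B_i^{t}=\beta_i B_i'^{t}$ for all $i$ and all $t$.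
   Context: A family $A=\{A^s\}_{s=1}^{d}\subset M_{D\times D'}(\mathbb{C})$ is called an injective MPS tensor if the linear map $M_{D'\times D}(\mathbb{C})\to\mathbb{C}^d$, $X\mapsto(\mathrm{tr}(XA^s))_{s=1}^d$, is injective; equivalently, the matrices $A^1,\dots,A^d$ span $M_{D\times D'}(\mathbb{C})$. *)

From HB Require Import structures.
From mathcomp Require Import all_boot all_order all_algebra.
From mathcomp Require Import complex Rstruct.
Set Implicit Arguments. Unset Strict Implicit. Unset Printing Implicit Defensive.
Import GRing.Theory.
Local Open Scope ring_scope.

Notation CC := (Rdefinitions.R)[i].

Definition injective_mps (D D' d : nat) (A : 'I_d -> 'M[CC]_(D, D')) : Prop :=
  forall X : 'M[CC]_(D', D), (forall s, \tr (X *m A s) = 0) -> X = 0.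

Definition extA (n : nat) (D : nat -> nat)
  (a : forall j : 'I_n, 'M[CC]_(D j.*2, D j.*2.+1)) (j : nat)
  : 'M[CC]_(D j.*2, D j.*2.+1) :=
  match (j < n)%N as b return (j < n)%N = b -> 'M[CC]_(D j.*2, D j.*2.+1) with
  | true => fun h => a (Ordinal h)
  | false => fun _ => 0
  end erefl.

Definition extB (n : nat) (D : nat -> nat)
  (b : forall j : 'I_n, 'M[CC]_(D j.*2.+1, D j.+1.*2)) (j : nat)
  : 'M[CC]_(D j.*2.+1, D j.+1.*2) :=
  match (j < n)%N as c return (j < n)%N = c -> 'M[CC]_(D j.*2.+1, D j.+1.*2) with
  | true => fun h => b (Ordinal h)
  | false => fun _ => 0
  end erefl.

Fixpoint chain (D : nat -> nat)
  (a : forall j : nat, 'M[CC]_(D j.*2, D j.*2.+1))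
  (b : forall j : nat, 'M[CC]_(D j.*2.+1, D j.+1.*2)) (m : nat)
  : 'M[CC]_(D 0, D m.*2) :=
  match m return 'M[CC]_(D 0, D m.*2) with
  | 0 => 1%:M
  | m'.+1 => chain a b m' *m a m' *m b m'
  end.

(* The MPS product A_1^{s_1} B_1^{t_1} ... A_n^{s_n} B_n^{t_n}, with the
   paper's index i = j+1 for j : 'I_n; A_j^s : 'M_(D (2j), D (2j+1)),
   B_j^t : 'M_(D (2j+1), D (2j+2)). *)
Definition mps_prod (n : nat) (D : nat -> nat) (d e : 'I_n -> nat)
  (A : forall j : 'I_n, 'I_(d j) -> 'M[CC]_(D j.*2, D j.*2.+1))
  (B : forall j : 'I_n, 'I_(e j) -> 'M[CC]_(D j.*2.+1, D j.+1.*2))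
  (s : forall j : 'I_n, 'I_(d j)) (t : forall j : 'I_n, 'I_(e j))
  : 'M[CC]_(D 0, D n.*2) :=
  chain (extA (fun j => A j (s j))) (extB (fun j => B j (t j))) n.

From mathcomp Require Import all_boot all_order all_algebra.
From mathcomp Require Import complex Rstruct.
From mathcomp Require Import ring.
Import GRing.Theory.
Local Open Scope ring_scope.

(* Each injective family [A_i] spans its whole matrix space, so by multilinearity
   the hypothesis holds with arbitrary matrices in place of the [A_i^s].  Putting
   matrix units [E_(q_(i-1), p_i)] there and reading off one entry gives
   [prod_i B_i^(t_i)(p_i, q_i) = prod_i B'_i^(t_i)(p_i, q_i)] for all choices of
   [t_i, p_i, q_i].  A product identity of this shape forces the factors to be
   proportional, with constants whose product is [1]. *)

Lemma prod_eq_scale {K : fieldType} {I : finType} {X : I -> choiceType}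
    {f g : forall i, X i -> K} :
  (forall i, exists x, f i x != 0) ->
  (forall x : forall i, X i, \prod_i f i (x i) = \prod_i g i (x i)) ->
  exists beta : I -> K, [/\ forall i, beta i != 0, \prod_i beta i = 1
                          & forall i x, f i x = beta i * g i x].
Proof.
move=> fnz fg.
pose w i := xchoose (fnz i).
have fw_neq0 i : f i (w i) != 0 := xchooseP (fnz i).
have prod_fw_neq0 : \prod_i f i (w i) != 0 by apply/prodf_neq0 => i _.
have gw_neq0 i : g i (w i) != 0.
  by move: prod_fw_neq0; rewrite fg => /prodf_neq0/(_ i isT).
exists (fun i => f i (w i) / g i (w i)); split.
- by move=> i; rewrite mulf_neq0 ?invr_neq0.
- by rewrite prodf_div fg divff // -fg.
move=> i0 x0.
have split_at (h : forall i, X i -> K) (x : X i0) :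
    \prod_i h i (dfwith w x i) = h i0 x * \prod_(i | i != i0) h i (w i).
  rewrite (bigD1 i0) //= dfwith_in; congr (_ * _).
  by apply: eq_bigr => i ?; rewrite dfwith_out // eq_sym.
have := fg (dfwith w x0); have := fg (dfwith w (w i0)).
rewrite !split_at.
set P := \prod_(i | _) f i _; set Q := \prod_(i | _) g i _ => ew ex.
have P_neq0 : P != 0 by apply/prodf_neq0 => i _.
have -> : f i0 x0 = g i0 x0 * Q / P by rewrite -ex mulfK.
have -> : f i0 (w i0) = g i0 (w i0) * Q / P by rewrite -ew mulfK.
by field; rewrite P_neq0 gw_neq0.
Qed.

Lemma mxvec_dot (R : pzRingType) (m n : nat) (M : 'M[R]_(m, n)) (v : 'rV_(m * n)) :
  \sum_k v 0 k * mxvec M 0 k = \sum_i \sum_j vec_mx v i j * M i j.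
Proof.
rewrite (reindex _ (curry_mxvec_bij _ _)) /= pair_bigA /=.
by apply: eq_bigr => [[i j]] _ /=; rewrite mxvecE mxE.
Qed.

(* Injectivity of [X |-> (tr (X A^s))_s] says that the rows [mxvec (A s)]
   have full rank, so they span all of [M_(D, D')]. *)
Lemma injective_mps_span {D D' d : nat} (A : 'I_d -> 'M[CC]_(D, D')) :
  injective_mps A -> forall Y, exists c : 'I_d -> CC, Y = \sum_s c s *: A s.
Proof.
move=> injA Y.
pose M := \matrix_(s < d) mxvec (A s).
have free_Mt : row_free M^T.
  apply: inj_row_free => v vM0.
  suff vec_v0 : (vec_mx v)^T = 0.
    by apply/eqP; rewrite -vec_mx_eq0 -(inj_eq (@trmx_inj _ _ _)) vec_v0 trmx0.
  apply: injA => s; have := congr1 (fun N : 'M[CC]_(1, d) => N 0 s) vM0.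
  rewrite !mxE => <-; rewrite /mxtrace.
  under eq_bigr => i _ do rewrite mxE.
  rewrite exchange_big /=.
  under [RHS]eq_bigr => k _ do rewrite !mxE.
  rewrite mxvec_dot; apply: eq_bigr => i _; apply: eq_bigr => j _.
  by rewrite !mxE.
have /row_fullP[C MC] : row_full M by rewrite /row_full -mxrank_tr.
exists (fun s => (mxvec Y *m C) 0 s); apply: (can_inj mxvecK).
rewrite linear_sum /= -[LHS]mulmx1 -MC mulmxA mulmx_sum_row.
by apply: eq_bigr => s _; rewrite rowK linearZ.
Qed.

Section Chain.

Context {D : nat -> nat}.
Implicit Types (a : forall j : nat, 'M[CC]_(D j.*2, D j.*2.+1))
               (b : forall j : nat, 'M[CC]_(D j.*2.+1, D j.+1.*2)).

Lemma eq_chain {a a' b b' N} :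
  (forall j, (j < N)%N -> a j = a' j) -> (forall j, (j < N)%N -> b j = b' j) ->
  chain a b N = chain a' b' N.
Proof.
elim: N => [|N IH] eq_a eq_b //=.
by rewrite IH ?eq_a ?eq_b // => j ltjN; [apply: eq_a | apply: eq_b]; exact: ltnW.
Qed.

Lemma chain_sum {a} b {m N k} {c : 'I_k -> CC} {M : 'I_k -> 'M[CC]_(D m.*2, D m.*2.+1)} :
  (m < N)%N -> a m = \sum_s c s *: M s ->
  chain a b N = \sum_s c s *: chain (dfwith a (M s)) b N.
Proof.
move=> + am; elim: N => [//|N IH]; rewrite ltnS leq_eqVlt => /orP[/eqP<-|ltmN] /=.
  have chain_m s : chain (dfwith a (M s)) b m = chain a b m.
    by apply: eq_chain => // j ltjm; rewrite dfwith_out // gtn_eqF.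
  rewrite am mulmx_sumr mulmx_suml; apply: eq_bigr => s _.
  by rewrite chain_m dfwith_in -scalemxAr -scalemxAl.
rewrite IH // !mulmx_suml; apply: eq_bigr => s _.
by rewrite -!scalemxAl dfwith_out // ltn_eqF.
Qed.

End Chain.

Lemma extA_lt (n : nat) (D : nat -> nat)
    (a : forall j : 'I_n, 'M[CC]_(D j.*2, D j.*2.+1)) j (ltjn : (j < n)%N) :
  extA a j = a (Ordinal ltjn).
Proof.
rewrite /extA; move: (erefl (j < n)%N); case: {2 3}(j < n)%N => h.
  by rewrite (bool_irrelevance h ltjn).
by exfalso; move: ltjn; rewrite h.
Qed.

Lemma extB_ord (n : nat) (D : nat -> nat)
    (b : forall j : 'I_n, 'M[CC]_(D j.*2.+1, D j.+1.*2)) (j : 'I_n) :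
  extB b j = b j.
Proof.
case: j => j ltjn /=; rewrite /extB; move: (erefl (j < n)%N).
case: {2 3}(j < n)%N => h; first by rewrite (bool_irrelevance h ltjn).
by exfalso; move: ltjn; rewrite h.
Qed.

(* By induction on the number of slots already freed: the next slot [a m] is
   expanded in the span of [A m] and [chain] is linear in it. *)
Lemma chain_eq_span {n : nat} {D : nat -> nat} {d : 'I_n -> nat}
    {A : forall j : 'I_n, 'I_(d j) -> 'M[CC]_(D j.*2, D j.*2.+1)}
    {b b' : forall j : nat, 'M[CC]_(D j.*2.+1, D j.+1.*2)} :
  (forall j, injective_mps (A j)) ->
  (forall s : forall j, 'I_(d j),
     chain (extA (fun j => A j (s j))) b n = chain (extA (fun j => A j (s j))) b' n) ->
  forall a, chain a b n = chain a b' n.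
Proof.
move=> injA eqA.
suff eq_from m : (m <= n)%N -> forall a : forall j, 'M_(D j.*2, D j.*2.+1),
    (forall j (ltjn : (j < n)%N), (m <= j)%N -> exists s, a j = A (Ordinal ltjn) s) ->
    chain a b n = chain a b' n.
  by move=> a; apply: (eq_from n (leqnn n)) => j ltjn; rewrite leqNgt ltjn.
elim: m => [_|m IH ltmn] a aA.
  have aA' (j : 'I_n) : exists s, a j == A j s.
    by case: j => j ltjn; have [s ->] := aA j ltjn isT; exists s.
  pose s j := xchoose (aA' j).
  have eq_a i : (i < n)%N -> extA (fun j => A j (s j)) i = a i.
    by move=> ltin; rewrite extA_lt; apply/esym/eqP; exact: xchooseP (aA' (Ordinal ltin)).
  by rewrite -(eq_chain (b := b) eq_a (fun _ _ => erefl))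
   -(eq_chain (b := b') eq_a (fun _ _ => erefl)).
have [c ac] := injective_mps_span _ (injA (Ordinal ltmn)) (a m).
rewrite (chain_sum b ltmn ac) (chain_sum b' ltmn ac).
apply: eq_bigr => s _; congr (_ *: _); apply: IH (ltnW ltmn) _ _ => j ltjn lemj.
case: (eqVneq m j) => [eqmj|nemj].
  by subst j; rewrite (bool_irrelevance ltjn ltmn); exists s; rewrite dfwith_in.
by rewrite dfwith_out //; apply: aA; rewrite ltn_neqAle nemj lemj.
Qed.

(* Matrix units and entries with [nat] indices, out-of-range indices giving [0]:
   ordinal index families [r j : 'I_(D j.*2)] would have to be defined for every
   [j : nat], whereas [D k] is only known to be positive for [k <= 2n]. *)
Definition nat_delta_mx {R : pzRingType} (m n x y : nat) : 'M[R]_(m, n) :=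
  \matrix_(i, j) ((i == x :> nat) && (j == y :> nat))%:R.

Definition nat_entry {R : pzRingType} {m n : nat} (M : 'M[R]_(m, n)) (x y : nat) : R :=
  \sum_(i < m) \sum_(j < n) ((i == x :> nat) && (j == y :> nat))%:R * M i j.

Lemma nat_entry_ord (R : pzRingType) (m n : nat) (M : 'M[R]_(m, n)) (x : 'I_m) (y : 'I_n) :
  nat_entry M x y = M x y.
Proof.
rewrite /nat_entry (bigD1 x) //= [X in _ + X]big1 => [|i neix]; last first.
  by apply: big1 => j _; rewrite (negbTE neix : (i == x :> nat) = false) mul0r.
rewrite addr0 (bigD1 y) //= [X in _ + X]big1 => [|j nejy].
  by rewrite !eqxx mul1r addr0.
by rewrite (negbTE nejy : (j == y :> nat) = false) andbF mul0r.
Qed.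

Lemma mul_nat_delta_mx (R : pzRingType) (m n p q x1 x2 y1 y2 : nat) (M : 'M[R]_(n, p)) :
  nat_delta_mx m n x1 x2 *m M *m nat_delta_mx p q y1 y2
    = nat_entry M x2 y1 *: nat_delta_mx m q x1 y2.
Proof.
apply/matrixP => i j; rewrite !mxE /nat_entry mulr_suml.
under eq_bigr => k _ do rewrite !mxE mulr_suml.
rewrite exchange_big /=; apply: eq_bigr => l _; rewrite mulr_suml.
apply: eq_bigr => k _; rewrite !mxE.
by case: (i == x1 :> nat); case: (l == x2 :> nat); case: (k == y1 :> nat);
  case: (j == y2 :> nat); rewrite /= ?mul0r ?mulr0 ?mul1r ?mulr1.
Qed.

Lemma chain_nat_delta (D : nat -> nat) (p r : nat -> nat)
    (b : forall j : nat, 'M[CC]_(D j.*2.+1, D j.+1.*2)) (N w y : nat) :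
  chain (fun j => nat_delta_mx (D j.*2) (D j.*2.+1) (r j) (p j)) b N
    *m nat_delta_mx (D N.*2) w (r N) y
  = (\prod_(j < N) nat_entry (b j) (p j) (r j.+1)) *: nat_delta_mx (D 0) w (r 0) y.
Proof.
elim: N w y => [|N IH] w y /=; first by rewrite mul1mx big_ord0 scale1r.
by rewrite IH -!scalemxAl mul_nat_delta_mx big_ord_recr scalerA.
Qed.

Lemma chain_entries_prod {n : nat} {D : nat -> nat}
    {b b' : forall j : nat, 'M[CC]_(D j.*2.+1, D j.+1.*2)} :
  (0 < D 0)%N -> (forall a, chain a b n = chain a b' n) ->
  forall p q : nat -> nat,
  \prod_(j < n) nat_entry (b j) (p j) (q j) = \prod_(j < n) nat_entry (b' j) (p j) (q j).
Proof.
move=> D0_gt0 eq_b p q.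
pose r j := if j is k.+1 then q k else 0%N.
pose a j : 'M[CC]_(D j.*2, D j.*2.+1) := nat_delta_mx _ _ (r j) (p j).
have := congr1 (fun M => M *m nat_delta_mx (D n.*2) 1 (r n) 0) (eq_b a).
rewrite /= !chain_nat_delta => /(congr1 (fun M : 'M_(D 0, 1) => M (Ordinal D0_gt0) ord0)).
by rewrite !mxE /= !mulr1.
Qed.

Theorem lemma1 (n : nat) (D : nat -> nat) (d e : 'I_n -> nat)
  (A : forall j : 'I_n, 'I_(d j) -> 'M[CC]_(D j.*2, D j.*2.+1))
  (B B' : forall j : 'I_n, 'I_(e j) -> 'M[CC]_(D j.*2.+1, D j.+1.*2)) :
  (1 <= n)%N ->
  (forall k, (k <= n.*2)%N -> (0 < D k)%N) ->
  (forall j : 'I_n, injective_mps (A j)) ->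
  (forall j : 'I_n, exists t, B j t != 0) ->
  (forall (s : forall j : 'I_n, 'I_(d j)) (t : forall j : 'I_n, 'I_(e j)),
      mps_prod A B s t = mps_prod A B' s t) ->
  exists beta : 'I_n -> CC,
    (forall j, beta j != 0) /\
    \prod_(j < n) beta j = 1 /\
    (forall j t, B j t = beta j *: B' j t).
Proof.
move=> _ D_gt0 injA B_neq0 eqAB.
pose X (j : 'I_n) : choiceType := ('I_(e j) * 'I_(D j.*2.+1) * 'I_(D j.+1.*2))%type.
have entries_prod (x : forall j, X j) :
    \prod_j B j (x j).1.1 (x j).1.2 (x j).2 = \prod_j B' j (x j).1.1 (x j).1.2 (x j).2.
  pose t j := (x j).1.1.
  pose p i := if insub i is Some j then val (x j).1.2 else 0%N.
  pose q i := if insub i is Some j then val (x j).2 else 0%N.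
  have := chain_entries_prod (D_gt0 0%N isT)
    (chain_eq_span injA (fun s => eqAB s t)) p q.
  have entryE (C : forall j : 'I_n, 'I_(e j) -> 'M_(D j.*2.+1, D j.+1.*2)) (j : 'I_n) :
      nat_entry (extB (fun j => C j (t j)) j) (p j) (q j)
        = C j (x j).1.1 (x j).1.2 (x j).2.
    by rewrite extB_ord /p /q valK nat_entry_ord.
  by rewrite !(eq_bigr _ (fun j _ => entryE _ j)).
have [|beta [beta_neq0 prod_beta eqB]] :=
    prod_eq_scale (f := fun j (x : X j) => B j x.1.1 x.1.2 x.2)
                  (g := fun j (x : X j) => B' j x.1.1 x.1.2 x.2) _ entries_prod.
  move=> j; have [t /matrix0Pn[x [y Bxy]]] := B_neq0 j.
  by exists (t, x, y).
exists beta; do 2!split=> //; move=> j t; apply/matrixP => x y.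
by rewrite mxE (eqB j (t, x, y)).
Qed.
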